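(* Let $a,b$ be positive integers with $\gcd(a,b)=1$. For all $\pi\in\mathcal{D}_{b,-a}(a,b)$, $\mathrm{word}(\widetilde{\rho}\circ\tilde f(\pi))=\mathrm{sw}^+_{b,-a}\circ\mathrm{rev}(\mathrm{word}(\pi))$.
   Context: Partitions are drawn in English convention in the first quadrant; a partition with at most $a$ parts, each at most $b$, has as frontier a lattice path from $(0,0)$ to $(b,a)$ with unit north (N) and east (E) steps, its diagram being the unit squares above and to the left of the path; $\mathrm{word}(\lambda)\in\{\mathrm{N},\mathrm{E}\}^*$ is the word of this frontier path. $\mathrm{rev}$ reverses a word. For a word $u$ with finitely many N's, $\mathrm{ptn}(u)$ is the partition whose parts are, for each N of $u$, the number of E's preceding it. The $(b,-a)$-level of a lattice point $(x,y)$ is $by-ax$; a unit square $[x,x+1]\times[y,y+1]$ has the level of its southeast corner. Under the west-south convention, a step of a path gets the level of its starting point. $\mathcal{D}_{b,-a}(a,b)$ is the set of partitions fitting in the $a\times b$ rectangle whose frontier path visits only points of nonnegative level. For $\pi\in\mathcal{D}_{b,-a}(a,b)$ let $L(\pi)$ be the set of levels of unit squares lying above the line $by=ax$ and below the frontier path of $\pi$. Let $z=z_0z_1z_2\cdots$ with $z_0=\mathrm{E}$ and, for $i>0$, $z_i=\mathrm{N}$ if $i\in L(\pi)$ and $z_i=\mathrm{E}$ otherwise; $\tilde f(\pi)=\mathrm{ptn}(z)$. Let $y$ be the subword of $z$ consisting of those $z_i$ ($i\ge0$) for which $i+a$ is the west-south level of some step of the frontier path of $\pi$; then $\widetilde\rho(\tilde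 f(\pi))=\mathrm{ptn}(y)$, regarded as a partition fitting in the $a\times b$ rectangle. For a word $w=w_1\cdots w_n$, set $l_0=0$, $l_i=l_{i-1}+b$ if $w_i=\mathrm{N}$, $l_i=l_{i-1}-a$ if $w_i=\mathrm{E}$. $\mathrm{sw}^+_{b,-a}(w)$ is obtained by: for $k=0,-1,-2,\ldots$ and then $k=\ldots,3,2,1$ (all nonpositive values in decreasing order, then positive values in decreasing order), scan $w$ from left to right appending each $w_i$ ($i\ge1$) with $l_i=k$. *)

From HB Require Import structures.
From mathcomp Require Import all_boot all_order all_algebra.
Set Implicit Arguments. Unset Strict Implicit. Unset Printing Implicit Defensive.
Import Order.TTheory GRing.Theory Num.Theory.

Inductive step := N | E.
Definition step_eqb (x y : step) :=
  match x, y with N, N | E, E => true | _, _ => false end.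
Lemma step_eqP : Equality.axiom step_eqb.
Proof. by case; case; constructor. Qed.
HB.instance Definition _ := hasDecEq.Build step step_eqP.

Definition is_partition (l : seq nat) : bool :=
  sorted geq l && all (fun p => 0 < p) l.
Definition fits (a b : nat) (l : seq nat) : bool :=
  (size l <= a) && all (fun p => p <= b) l.

Definition Npos (u : seq step) : seq nat :=
  [seq i <- iota 0 (size u) | nth E u i == N].

Definition Ebefore (u : seq step) (j : nat) : nat :=
  count_mem E (take (nth 0 (Npos u) j) u).

Definition ptn (u : seq step) : seq nat :=
  sort geq [seq p <- [seq Ebefore u j | j <- iota 0 (size (Npos u))] | 0 < p].

(* word(lambda) for lambda viewed inside the a x b rectangle: the frontier
   path from (0,0) to (b,a); the row at height y has (y-th smallest, padded
   by zeros to a rows) part many E's before its N. *)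
Fixpoint build_path (b prev : nat) (qs : seq nat) : seq step :=
  match qs with
  | [::] => nseq (b - prev) E
  | q :: qs' => nseq (q - prev) E ++ N :: build_path b q qs'
  end.
Definition word (a b : nat) (l : seq nat) : seq step :=
  let ps := sort leq [seq p <- l | 0 < p] in
  build_path b 0 (nseq (a - size ps) 0 ++ ps).

Definition lvl (a b : nat) (w : seq step) (i : nat) : int :=
  ((Posz (b * count_mem N (take i w))) - (Posz (a * count_mem E (take i w))))%R.

Definition inD (a b : nat) (pi : seq nat) : bool :=
  [&& is_partition pi, fits a b pi &
      all (fun i => (0 <= lvl a b (word a b pi) i)%R) (iota 0 (a + b).+1)].

(* L(pi): levels of unit squares [x,x+1]x[y,y+1] of the rectangle lying above
   the line by = ax (level of SE corner >= 0) and below the frontier path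
   (x >= number of E's before the N step at height y). *)
Definition Lset (a b : nat) (pi : seq nat) : seq int :=
  let w := word a b pi in
  flatten [seq [seq ((Posz (b * y)) - (Posz (a * x.+1)))%R
     | x <- iota 0 b
     & (Ebefore w y <= x) && (0 <= (Posz (b * y)) - (Posz (a * x.+1)))%R]
     | y <- iota 0 a].

Definition zword (a b : nat) (pi : seq nat) (i : nat) : step :=
  if i == 0 then E else if (Posz i \in Lset a b pi) then N else E.

(* f~(pi) = ptn(z); all N's of z have index <= a*b, so a finite prefix suffices *)
Definition f_tilde (a b : nat) (pi : seq nat) : seq nat :=
  ptn [seq zword a b pi i | i <- iota 0 (a * b).+1].

Definition step_levels (a b : nat) (pi : seq nat) : seq int :=
  let w := word a b pi in [seq lvl a b w j | j <- iota 0 (size w)].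

(* the subword y of z: the z_i with i + a a step level (such i are <= a*b) *)
Definition yword (a b : nat) (pi : seq nat) : seq step :=
  [seq zword a b pi i | i <- iota 0 (a * b).+1
     & (Posz (i + a)) \in step_levels a b pi].

Definition rho_f_tilde (a b : nat) (pi : seq nat) : seq nat := ptn (yword a b pi).

(* sw^+_{b,-a}(w): levels l_i lie in [-a*n, b*n], n = size w *)
Definition sw_plus (a b : nat) (w : seq step) : seq step :=
  let n := size w in
  let pick (k : int) := [seq nth E w i.-1 | i <- iota 1 n & lvl a b w i == k] in
  flatten [seq pick (- Posz j)%R | j <- iota 0 (a * n).+1] ++
  flatten [seq pick (Posz (b * n - j)) | j <- iota 0 (b * n)].

From HB Require Import structures.
From mathcomp Require Import all_boot all_order all_algebra.
From mathcomp Require Import zify.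
Set Implicit Arguments. Unset Strict Implicit. Unset Printing Implicit Defensive.
Import GRing.Theory.

(* Let w be the frontier path of pi and give each step the level of its starting
   point.  Since a and b are coprime, distinct steps have distinct levels, and
   since w stays weakly above the diagonal these levels are nonnegative.  The
   levels along rev w are the negated levels along w, so sw^+ (rev w) lists the
   steps of w by increasing level (the reversal inside a level class is
   invisible, each class having at most one step).

   A step of level j < a is north: an east step would end below the diagonal.
   A step of level i + a starting at (x, y) is north exactly when the unit
   square with south-west corner (x, y) lies below the path; this square has
   level i, lies above the diagonal, and is the only square of the rectangle
   at level i, so the step is north exactly when i is in L(pi): it is z_i.
   Hence sw^+ (rev w) = N^k y is a rearrangement of w, and word (ptn y) =
   N^(a - #N y) y because ptn inverts word on words with b east steps. *)

Definition Ecounts (u : seq step) : seq nat :=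
  [seq count_mem E (take p u) | p <- Npos u].

Lemma ptnE u : ptn u = sort geq [seq p <- Ecounts u | 0 < p].
Proof.
rewrite /ptn; congr (sort _ (filter _ _)).
by rewrite /Ecounts -(mkseq_nth 0 (Npos u)) /mkseq -map_comp size_map size_iota.
Qed.

Lemma Npos_cons x u :
  Npos (x :: u) = (if x == N then [:: 0] else [::]) ++ map succn (Npos u).
Proof. by rewrite /Npos /= (iotaDl 1 0) filter_map; case: x. Qed.

Lemma Ecounts_N u : Ecounts (N :: u) = 0 :: Ecounts u.
Proof. by rewrite /Ecounts Npos_cons /= -map_comp. Qed.

Lemma Ecounts_E u : Ecounts (E :: u) = map succn (Ecounts u).
Proof. by rewrite /Ecounts Npos_cons /= -!map_comp. Qed.

Lemma size_Ecounts u : size (Ecounts u) = count_mem N u.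
Proof.
elim: u => [|[] u IH] //; first by rewrite Ecounts_N /= IH.
by rewrite Ecounts_E size_map IH.
Qed.

Lemma sorted_Ecounts u : sorted leq (Ecounts u).
Proof.
elim: u => [|[] u IH] //; first by rewrite Ecounts_N; case: (Ecounts u) IH.
by rewrite Ecounts_E sorted_map.
Qed.

Lemma build_path_E B c l : c < B ->
  build_path B c (map (addn c.+1) l) = E :: build_path B c.+1 (map (addn c.+1) l).
Proof.
case: l => [|x l] hc /=; first by rewrite -subnSK.
by rewrite addSn subSn ?leq_addr // subSS.
Qed.

Lemma build_path_Ecounts u B c : c + count_mem E u <= B ->
  build_path B c (map (addn c) (Ecounts u)) = u ++ nseq (B - c - count_mem E u) E.
Proof.
elim: u c => [|[] u IH] c hc; first by rewrite /= subn0.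
- by rewrite Ecounts_N /= addn0 subnn IH.
- rewrite Ecounts_E -map_comp (eq_map (_ : addn c \o succn =1 addn c.+1)); last first.
    by move=> p; rewrite /= addnS.
  rewrite /= add1n addnS in hc *.
  rewrite build_path_E ?IH //; last exact: leq_ltn_trans (leq_addr _ _) hc.
  by rewrite -!subnDA addSn addnS.
Qed.

Lemma build_path_nseq0 B m l :
  build_path B 0 (nseq m 0 ++ l) = nseq m N ++ build_path B 0 l.
Proof. by elim: m => //= m ->. Qed.

Lemma nseq_pad_filter_pos a l : sorted leq l -> size l <= a ->
  nseq (a - size [seq p <- l | 0 < p]) 0 ++ [seq p <- l | 0 < p] =
  nseq (a - size l) 0 ++ l.
Proof.
elim: l a => [|[|x] l IH] a //= hs hsz.
- rewrite IH ?(path_sorted hs) ?(ltnW hsz) // -(subnSK hsz).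
  by elim: (a - (size l).+1) => //= k ->.
- suff -> : [seq p <- l | 0 < p] = l by [].
  apply/all_filterP; move: hs; rewrite (path_sortedE leq_trans) => /andP[hall _].
  by apply: sub_all hall => y; exact: leq_trans (ltn0Sn x).
Qed.

Lemma word_ptn a b u : count_mem E u = b -> count_mem N u <= a ->
  word a b (ptn u) = nseq (a - count_mem N u) N ++ u.
Proof.
move=> hE hN.
have filter_Ecounts : sort leq [seq p <- ptn u | 0 < p] = [seq p <- Ecounts u | 0 < p].
  rewrite ptnE filter_sort; last 2 first.
  - by move=> x y; exact: leq_total.
  - by move=> x y z hyx hzy; exact: leq_trans hzy hyx.
  rewrite -filter_predI (eq_filter (_ : predI _ _ =1 (fun p => 0 < p))); last first.
    by move=> p /=; rewrite andbb.
  apply: (sorted_eq leq_trans anti_leq).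
  - by apply: sort_sorted; exact: leq_total.
  - by apply: sorted_filter; [exact: leq_trans | exact: sorted_Ecounts].
  - by rewrite perm_sort perm_sort.
rewrite /word filter_Ecounts nseq_pad_filter_pos ?sorted_Ecounts ?size_Ecounts //.
rewrite build_path_nseq0 -[Ecounts u]map_id (eq_map (_ : id =1 addn 0)) //.
by rewrite build_path_Ecounts ?hE // subn0 subnn cats0.
Qed.

Lemma count_build_path_N B c qs : count_mem N (build_path B c qs) = size qs.
Proof.
elim: qs c => [|q qs IH] c /=; first by rewrite count_nseq mul0n.
by rewrite count_cat count_nseq /= IH mul0n.
Qed.

Lemma count_build_path_E B c qs : path leq c qs -> all (leq^~ B) qs -> c <= B ->
  count_mem E (build_path B c qs) = B - c.
Proof.
elim: qs c => [|q qs IH] c /= hp hB hc; first by rewrite count_nseq mul1n.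
case/andP: hp => hcq hp; case/andP: hB => hqB hB.
rewrite count_cat count_nseq /= mul1n IH //; lia.
Qed.

Lemma word_counts a b pi : fits a b pi ->
  count_mem N (word a b pi) = a /\ count_mem E (word a b pi) = b.
Proof.
case/andP => hsz hB; rewrite /word.
set ps := sort leq [seq p <- pi | 0 < p].
have size_ps : size ps <= a.
  by rewrite size_sort size_filter (leq_trans (count_size _ _) hsz).
split; first by rewrite count_build_path_N size_cat size_nseq subnK.
rewrite count_build_path_E ?subn0 //.
- have : sorted leq ps by apply: sort_sorted; exact: leq_total.
  by elim: (a - size ps) => [|k IH] hps /=; [case: ps {size_ps} hps | rewrite IH].
- rewrite all_cat all_nseq leq0n orbT all_sort.
  by apply/allP => x; rewrite mem_filter => /andP[_]; exact: (allP hB).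
Qed.

Lemma coprime_lincomb_inj a b x1 x2 y1 y2 : coprime a b -> x1 < b -> x2 < b ->
  a * x1 + b * y1 = a * x2 + b * y2 -> x1 = x2.
Proof.
wlog le_x12 : x1 x2 y1 y2 / x1 <= x2.
  move=> wlog_le hab hx1 hx2 he; case: (leqP x1 x2) => hx.
    exact: wlog_le hx hab hx1 hx2 he.
  by apply/esym/(wlog_le x2 x1 y2 y1) => //; apply: ltnW.
move=> hab hx1 hx2 he.
have : b %| a * (x2 - x1).
  by apply/dvdnP; exists (y1 - y2); rewrite mulnBr mulnBl; lia.
have coprime_ba : coprime b a by rewrite coprime_sym.
by rewrite (Gauss_dvdr _ coprime_ba) /dvdn modn_small => [/eqP|]; lia.
Qed.

Definition xcoord (w : seq step) p := count_mem E (take p w).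
Definition ycoord (w : seq step) p := count_mem N (take p w).

Lemma lvlE a b w p : lvl a b w p = (Posz (b * ycoord w p) - Posz (a * xcoord w p))%R.
Proof. by []. Qed.

Lemma count_E_add_N (s : seq step) : count_mem E s + count_mem N s = size s.
Proof. by elim: s => [|[] s IH] //=; rewrite ?addnS -IH. Qed.

Lemma xcoord_add_ycoord w p : p <= size w -> xcoord w p + ycoord w p = p.
Proof. by move=> hp; rewrite count_E_add_N size_takel. Qed.

Lemma count_take_S (T : eqType) (a : pred T) x0 s p : p < size s ->
  count a (take p.+1 s) = count a (take p s) + a (nth x0 s p).
Proof. by move=> hp; rewrite (take_nth x0 hp) -cats1 count_cat /= addn0. Qed.

Lemma count_take_mono T (a : pred T) s p q : p <= q ->
  count a (take p s) <= count a (take q s).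
Proof. by move=> hpq; rewrite -(subnKC hpq) takeD count_cat leq_addr. Qed.

Lemma count_take_le T (a : pred T) s p : count a (take p s) <= count a s.
Proof. by rewrite -{2}(cat_take_drop p s) count_cat leq_addr. Qed.

Lemma xcoordS w p : p < size w -> xcoord w p.+1 = xcoord w p + (nth E w p == E).
Proof. exact: count_take_S. Qed.

Lemma ycoordS w p : p < size w -> ycoord w p.+1 = ycoord w p + (nth E w p == N).
Proof. exact: count_take_S. Qed.

Lemma count_iota_nth (w : seq step) c p : p <= size w ->
  count (fun i => nth E w i == c) (iota 0 p) = count_mem c (take p w).
Proof. by move=> hp; rewrite -(map_nth_iota0 E hp) count_map. Qed.

Lemma nth_filter_iota (P : pred nat) m k : k < count P (iota 0 m) ->
  let q := nth 0 [seq i <- iota 0 m | P i] k in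
  [/\ q < m, P q & count P (iota 0 q) = k].
Proof.
elim: m k => [|m IH] k //.
rewrite -[m.+1]addn1 iotaD add0n count_cat filter_cat /= addn0 nth_cat size_filter => hk.
case: (ltnP k (count P (iota 0 m))) => hkm.
  by case: (IH k hkm) => hq hPq hcq; split=> //; apply: ltn_addr.
case hPm : (P m) hk => /= hk; last by rewrite addn0 ltnNge hkm in hk.
have -> : k = count P (iota 0 m) by lia.
by rewrite subnn addn1.
Qed.

Lemma nth_filter_iota_count (P : pred nat) m p : P p -> p < m ->
  nth 0 [seq i <- iota 0 m | P i] (count P (iota 0 p)) = p.
Proof.
move=> hP hpm; rewrite -(subnKC (ltnW hpm)) iotaD filter_cat nth_cat size_filter.
by rewrite ltnn subnn -(subnSK hpm) /= hP.
Qed.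

Lemma Ebefore_ycoord w p : p < size w -> nth E w p = N ->
  Ebefore w (ycoord w p) = xcoord w p.
Proof.
move=> hp hN; rewrite /Ebefore /Npos /ycoord -(@count_iota_nth w N p) ?(ltnW hp) //.
by rewrite nth_filter_iota_count ?hN.
Qed.

Lemma xcoord_lt_Ebefore w p : p < size w -> nth E w p = E ->
  ycoord w p < count_mem N w -> xcoord w p < Ebefore w (ycoord w p).
Proof.
move=> hp hE hy.
have hyN : ycoord w p < count (fun i => nth E w i == N) (iota 0 (size w)).
  by rewrite count_iota_nth // take_size.
have [] := nth_filter_iota hyN; rewrite -/(Npos w) /Ebefore.
set q := nth 0 (Npos w) _ => hq /eqP hNq.
rewrite count_iota_nth ?(ltnW hq) // -/(ycoord w q) -/(xcoord w q) => hyq.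
case: (ltngtP p q) => [hpq | hqp | hpq]; last by move: hE; rewrite hpq hNq.
- apply: leq_trans (count_take_mono _ _ hpq).
  by rewrite -/(xcoord w _) xcoordS // hE addn1.
- have := count_take_mono (pred1 N) w hqp.
  by rewrite -/(ycoord w _) ycoordS ?(ltn_trans hqp hp) // hNq hyq addn1 ltnn.
Qed.

Lemma iota1_rev n : iota 1 n = rev [seq n - p | p <- iota 0 n].
Proof.
elim: n => [|n IH] //.
rewrite -[X in iota _ X]addn1 iotaD IH add1n /= subn0 rev_cons -cats1; congr (rev _ ++ _).
by rewrite (iotaDl 1 0) -map_comp; apply: eq_map => p /=; rewrite subSS.
Qed.

Lemma flatten_map_nil_in (S : eqType) T (f : S -> seq T) s :
  {in s, forall x, f x = [::]} -> flatten (map f s) = [::].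
Proof.
elim: s => //= x s IH hf; rewrite hf ?mem_head // IH // => y hy.
by apply: hf; rewrite in_cons hy orbT.
Qed.

Lemma perm_flatten_filter_iota (T : eqType) (f : T -> nat) s K :
  perm_eq (flatten [seq [seq x <- s | f x == j] | j <- iota 0 K]) [seq x <- s | f x < K].
Proof.
elim: K => [|K IH]; first by rewrite (@eq_filter _ _ pred0) ?filter_pred0.
rewrite -addn1 iotaD map_cat flatten_cat /= cats0 add0n.
apply: perm_trans (_ : perm_eq _ ([seq x <- s | f x < K] ++ [seq x <- s | f x == K])) _.
  by rewrite perm_cat2r.
apply/permP => c; rewrite count_cat !count_filter -count_predUI.
rewrite (@eq_count _ (predI _ _) pred0) ?count_pred0 ?addn0; last first.
  by move=> x /=; case: ltngtP; rewrite ?andbF.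
by apply: eq_count => x /=; rewrite addn1 ltnS (leq_eqVlt (f x)) orbC -andb_orr.
Qed.

Definition level_pos a b (w : seq step) (j : nat) : seq nat :=
  [seq p <- iota 0 (size w) | lvl a b w p == Posz j].

Definition level_steps a b (w : seq step) (j : nat) : seq step :=
  [seq nth E w p | p <- level_pos a b w j].

Lemma nth_low_level a b w p j : p < size w -> (0 <= lvl a b w p.+1)%R ->
  lvl a b w p = Posz j -> j < a -> nth E w p = N.
Proof.
move=> hp hge0 hl hj; case hc : (nth E w p) => //; move: hge0.
by rewrite !lvlE xcoordS ?ycoordS // hc /= in hl *; lia.
Qed.

Section LevelsOfPath.

Variables (a b : nat) (w : seq step).
Hypothesis count_N : count_mem N w = a.

Lemma ycoord_le p : ycoord w p <= a.
Proof. by rewrite -count_N count_take_le. Qed.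

Lemma lvl_le p : p <= size w -> (lvl a b w p <= Posz (a * b))%R.
Proof. by move=> hp; have := ycoord_le p; rewrite lvlE; nia. Qed.

Lemma level_pos_high j : a * b < j -> level_pos a b w j = [::].
Proof.
move=> hj; rewrite /level_pos (@eq_in_filter _ _ pred0) ?filter_pred0 // => p.
rewrite mem_iota add0n => hp; apply/negbTE/eqP => hl.
by have := lvl_le (ltnW hp); rewrite hl lez_nat; lia.
Qed.

Hypothesis count_E : count_mem E w = b.

Lemma xcoord_le p : xcoord w p <= b.
Proof. by rewrite -count_E count_take_le. Qed.

Lemma size_path : size w = a + b.
Proof. by rewrite -count_E_add_N count_N count_E addnC. Qed.

Lemma lvl_rev i : i <= size w -> lvl a b (rev w) i = (- lvl a b w (size w - i))%R.
Proof.
move=> hi; rewrite /lvl take_rev !count_rev.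
have split_count c : count_mem c w =
    count_mem c (take (size w - i) w) + count_mem c (drop (size w - i) w).
  by rewrite -count_cat cat_take_drop.
by move: (split_count N) (split_count E); rewrite count_N count_E; lia.
Qed.

Hypothesis lvl_ge0 : forall p, p <= size w -> (0 <= lvl a b w p)%R.

Lemma all_low_level_steps : all (pred1 N) (flatten [seq level_steps a b w j | j <- iota 0 a]).
Proof.
apply/allP => x /flatten_mapP [j]; rewrite mem_iota add0n => /andP [_ hj] /mapP [p].
rewrite mem_filter mem_iota add0n => /andP [/eqP hl /andP [_ hp]] ->.
by rewrite /= (nth_low_level hp (lvl_ge0 hp) hl hj).
Qed.

Lemma perm_level_steps K : a * b < K ->
  perm_eq (flatten [seq level_steps a b w j | j <- iota 0 K]) w.
Proof.
move=> hK.
have absz_lvl p : p < size w -> Posz (absz (lvl a b w p)) = lvl a b w p.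
  by move=> hp; apply: gez0_abs; apply: lvl_ge0; apply: ltnW.
apply: perm_trans (_ : perm_eq _ (map (nth E w) (iota 0 (size w)))) _; last first.
  by rewrite map_nth_iota0 // take_size.
rewrite /level_steps (map_comp (map (nth E w)) (level_pos a b w)) -map_flatten; apply: perm_map.
have -> : [seq level_pos a b w j | j <- iota 0 K] =
    [seq [seq p <- iota 0 (size w) | absz (lvl a b w p) == j] | j <- iota 0 K].
  apply: eq_map => j; apply: eq_in_filter => p; rewrite mem_iota add0n => hp.
  by rewrite -(absz_lvl p hp).
apply: perm_trans (perm_flatten_filter_iota _ _ K) _.
rewrite (@eq_in_filter _ _ predT) ?filter_predT // => p; rewrite mem_iota add0n => hp.
by have := lvl_le (ltnW hp); rewrite -(absz_lvl p hp) lez_nat => /leq_ltn_trans; apply.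
Qed.

Hypotheses (a_gt0 : 0 < a) (b_gt0 : 0 < b) (coprime_ab : coprime a b).

Lemma lvl_inj p q : p < size w -> q < size w -> lvl a b w p = lvl a b w q -> p = q.
Proof.
wlog le_pq : p q / p <= q.
  move=> wlog_le hp hq hl; case: (leqP p q) => hpq; first exact: wlog_le.
  by apply/esym/wlog_le => //; apply: ltnW.
move=> hp hq; rewrite !lvlE => hl.
have hxy_p := xcoord_add_ycoord (ltnW hp); have hxy_q := xcoord_add_ycoord (ltnW hq).
have hx := count_take_mono (pred1 E) w le_pq.
have hy := count_take_mono (pred1 N) w le_pq.
rewrite -/(xcoord w _) -/(ycoord w _) in hx hy.
have he : a * xcoord w q + b * ycoord w p = a * xcoord w p + b * ycoord w q by lia.
have [hxq | hyq] : xcoord w q < b \/ ycoord w q < a by rewrite size_path in hq; lia.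
- have := coprime_lincomb_inj coprime_ab hxq (leq_ltn_trans hx hxq) he.
  by move=> hxx; rewrite hxx in he; nia.
- have he' : b * ycoord w p + a * xcoord w q = b * ycoord w q + a * xcoord w p by lia.
  have coprime_ba : coprime b a by rewrite coprime_sym.
  have := coprime_lincomb_inj coprime_ba (leq_ltn_trans hy hyq) hyq he'.
  by move=> hyy; rewrite hyy in he; nia.
Qed.

Lemma level_posP j : level_pos a b w j = [::] \/
  exists2 p, p < size w /\ lvl a b w p = Posz j & level_pos a b w j = [:: p].
Proof.
have [/hasP [p] | /hasPn hnil] := boolP (has (fun p => lvl a b w p == Posz j) (iota 0 (size w))).
- rewrite mem_iota add0n => /andP [_ hp] /eqP hl; right; exists p => //.
  rewrite -(filter_pred1_uniq (iota_uniq 0 (size w)) (_ : p \in iota 0 (size w))); last first.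
    by rewrite mem_iota.
  apply: eq_in_filter => q; rewrite mem_iota add0n => /andP [_ hq] /=.
  by apply/eqP/eqP => [hq'|->//]; apply: lvl_inj; rewrite // hq' hl.
- left; rewrite /level_pos -(filter_pred0 (iota 0 (size w))).
  by apply: eq_in_filter => p /hnil /negbTE.
Qed.

Lemma rev_level_steps j : rev (level_steps a b w j) = level_steps a b w j.
Proof. by rewrite /level_steps; case: (level_posP j) => [|[p _]] ->. Qed.

Lemma sw_plus_rev :
  sw_plus a b (rev w) = flatten [seq level_steps a b w j | j <- iota 0 (a * size w).+1].
Proof.
rewrite /sw_plus size_rev [X in _ ++ X]flatten_map_nil_in ?cats0; last first.
  move=> j; rewrite mem_iota add0n => /andP [_ hj].
  rewrite (@eq_in_filter _ _ pred0) ?filter_pred0 // => i.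
  rewrite mem_iota => /andP [_ hi]; rewrite lvl_rev //.
  have := lvl_ge0 (leq_subr i (size w)).
  by move=> hge0; apply/negbTE/eqP => hl; lia.
congr flatten; apply: eq_map => j; rewrite -rev_level_steps.
rewrite iota1_rev filter_rev map_rev filter_map -map_comp; congr rev.
rewrite /level_steps /level_pos (@eq_in_filter _ _ (fun p => lvl a b w p == Posz j)).
  apply/eq_in_map => p; rewrite mem_filter mem_iota => /and3P [_ _ hp] /=.
  by rewrite nth_rev ?size_rev; [congr nth | ]; lia.
move=> p; rewrite mem_iota => /andP [_ hp] /=.
by rewrite lvl_rev ?leq_subr // subKn ?(ltnW hp) // eqr_opp.
Qed.

End LevelsOfPath.

Section LevelsOfWord.

Variables (a b : nat) (pi : seq nat).
Hypotheses (a_gt0 : 0 < a) (b_gt0 : 0 < b) (coprime_ab : coprime a b).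
Hypothesis pi_in_D : inD a b pi.

Local Notation w := (word a b pi).

Lemma count_word_N : count_mem N w = a.
Proof. by case/and3P: pi_in_D => _ /word_counts []. Qed.

Lemma count_word_E : count_mem E w = b.
Proof. by case/and3P: pi_in_D => _ /word_counts []. Qed.

Lemma word_lvl_ge0 p : p <= size w -> (0 <= lvl a b w p)%R.
Proof.
case/and3P: pi_in_D => _ _ /allP hlvl hp; apply: hlvl.
by rewrite mem_iota add0n ltnS -(size_path count_word_N count_word_E).
Qed.

Lemma zword_of_N p i : p < size w -> nth E w p = N ->
  lvl a b w p = Posz (i + a) -> zword a b pi i = N.
Proof.
move=> hp hN; rewrite lvlE => hl.
have hy : ycoord w p < a.
  by have := ycoord_le count_word_N p.+1; rewrite ycoordS // hN addn1.
have hx : xcoord w p < b by nia.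
(* [z_0 = E] by definition, but a north step of level [a] would force [a] to
   divide [y < a]. *)
rewrite /zword; case: eqP => [i0 | _].
  have he : b * ycoord w p + a * 0 = b * 0 + a * (xcoord w p).+1 by lia.
  have := coprime_lincomb_inj _ hy a_gt0 he; rewrite coprime_sym => /(_ coprime_ab) y0.
  by rewrite y0 in he; nia.
suff -> : Posz i \in Lset a b pi by [].
apply/flatten_mapP; exists (ycoord w p); first by rewrite mem_iota.
apply/mapP; exists (xcoord w p); last by lia.
by rewrite mem_filter mem_iota /= (Ebefore_ycoord hp hN) leqnn hx /=; lia.
Qed.

Lemma zword_of_E p i : p < size w -> nth E w p = E ->
  lvl a b w p = Posz (i + a) -> zword a b pi i = E.
Proof.
move=> hp hE; rewrite lvlE => hl.
have hx : xcoord w p < b.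
  by have := xcoord_le count_word_E p.+1; rewrite xcoordS // hE addn1.
rewrite /zword; case: eqP => // _; case: ifP => // /flatten_mapP [y].
rewrite mem_iota add0n => hy /mapP [x]; rewrite mem_filter mem_iota add0n.
case/andP => /andP [hEb _] hxb hix.
have he : a * xcoord w p + b * y = a * x + b * ycoord w p by lia.
have xx := coprime_lincomb_inj coprime_ab hx hxb he.
have yy : y = ycoord w p by rewrite xx in he; nia.
have := xcoord_lt_Ebefore hp hE; rewrite count_word_N -yy => /(_ hy).
by rewrite xx ltnNge hEb.
Qed.

Lemma level_steps_shift i : level_steps a b w (a + i) =
  if Posz (i + a) \in step_levels a b pi then [:: zword a b pi i] else [::].
Proof.
rewrite /level_steps addnC.
case: (level_posP count_word_N count_word_E a_gt0 b_gt0 coprime_ab (i + a)).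
- move=> hnil; rewrite hnil; case: ifP => // /mapP [p]; rewrite mem_iota add0n => hp hl.
  have : p \in level_pos a b w (i + a) by rewrite mem_filter mem_iota add0n hp -hl eqxx.
  by rewrite hnil.
- move=> [p [hp hl] ->]; have -> : Posz (i + a) \in step_levels a b pi.
    by apply/mapP; exists p; rewrite ?mem_iota.
  by congr [:: _]; case hs : (nth E w p); [apply/esym/(zword_of_N hp) | apply/esym/(zword_of_E hp)].
Qed.

Lemma flatten_level_steps :
  flatten [seq level_steps a b w j | j <- iota 0 (a * size w).+1] =
  flatten [seq level_steps a b w j | j <- iota 0 a] ++ yword a b pi.
Proof.
have -> : (a * size w).+1 = a + ((a * b).+1 + (a * size w - a - a * b)).
  by rewrite (size_path count_word_N count_word_E); nia.
rewrite !iotaD !map_cat !flatten_cat [X in _ ++ (_ ++ X)]flatten_map_nil_in ?cats0; last first.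
  move=> j; rewrite mem_iota => /andP [hj _].
  by rewrite /level_steps (level_pos_high count_word_N) //; lia.
congr (_ ++ _); rewrite add0n -[X in iota X]addn0 iotaDl -map_comp /yword.
elim: (iota 0 (a * b).+1) => //= i s ->.
by rewrite level_steps_shift; case: ifP.
Qed.

End LevelsOfWord.

Unset Implicit Arguments.

Theorem mainTheorem7 (a b : nat) (ha : 0 < a) (hb : 0 < b) (hab : coprime a b)
  (pi : seq nat) (hpi : inD a b pi) :
  word a b (rho_f_tilde a b pi) = sw_plus a b (rev (word a b pi)).
Proof.
have count_N := count_word_N hpi; have count_E := count_word_E hpi.
have lvl_ge0 := word_lvl_ge0 hpi.
rewrite (sw_plus_rev count_N count_E lvl_ge0 ha hb hab) (flatten_level_steps ha hb hab hpi).
have /permP perm_w : perm_eq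
    (flatten [seq level_steps a b (word a b pi) j | j <- iota 0 a] ++ yword a b pi) (word a b pi).
  rewrite -(flatten_level_steps ha hb hab hpi); apply: perm_level_steps => //.
  by rewrite (size_path count_N count_E) ltnS leq_mul2l leq_addl orbT.
set low := flatten _ in perm_w *.
have low_N : low = nseq (size low) N.
  by apply/all_pred1P; apply: all_low_level_steps lvl_ge0.
move: (perm_w (pred1 N)) (perm_w (pred1 E)).
rewrite !count_cat count_N count_E low_N !count_nseq /= mul0n mul1n add0n => hN hE.
have size_low : size low = a - count_mem N (yword a b pi) by rewrite -{1}hN addnK.
rewrite /rho_f_tilde word_ptn ?hE //; last by rewrite -{2}hN leq_addl.
by rewrite -size_low -low_N.
Qed.
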